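(* Let $X$ be a uniformizable Alexandroff space. Then $X$ is a functional Alexandroff space if and only if $V(x)$ is finite for every $x\in X$.
   Context: For a topological space $X$ and $a\in X$, $V(a):=\bigcap\{U: U\text{ open}, a\in U\}$; $X$ is Alexandroff if every $V(a)$ is open. $X$ is uniformizable if its topology is induced by some uniform structure on $X$. For a map $f:X\to X$ and $a\in X$ let $V_f(a):=\bigcup_{n\ge 0}f^{-n}(a)=\{x\in X:\exists n\ge0,\ f^n(x)=a\}$. The sets $\{V_f(a):a\in X\}$ form a basis of a topology on $X$ (the functional Alexandroff topology associated to $f$), in which $V_f(a)$ is the smallest open neighbourhood of $a$. A topological space $X$ is a functional Alexandroff space if there is $f:X\to X$ whose functional Alexandroff topology equals the topology of $X$. *)

From mathcomp Require Import all_boot all_order.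
From mathcomp Require Import all_classical topology.
Set Implicit Arguments. Unset Strict Implicit. Unset Printing Implicit Defensive.
Local Open Scope classical_set_scope.

Definition minnbhd (T : topologicalType) (a : T) : set T :=
  \bigcap_(U in [set U : set T | open U /\ U a]) U.

Definition alexandroff (T : topologicalType) : Prop :=
  forall a : T, open (minnbhd a).

Definition rel_comp (X : Type) (U V : set (X * X)) : set (X * X) :=
  [set xz | exists y, U (xz.1, y) /\ V (y, xz.2)].

Definition is_uniformity (X : Type) (E : set (set (X * X))) : Prop :=
  E setT /\
    [/\ (forall U V, E U -> U `<=` V -> E V),
      (forall U V, E U -> E V -> E (U `&` V)),
      (forall U, E U -> forall x, U (x, x)),
      (forall U, E U -> E [set xy | U (xy.2, xy.1)]) &
      (forall U, E U -> exists2 V, E V & rel_comp V V `<=` U)].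

Definition uniform_open (X : Type) (E : set (set (X * X))) (A : set X) : Prop :=
  forall x, A x -> exists2 U, E U & [set y | U (x, y)] `<=` A.

Definition uniformizable (T : topologicalType) : Prop :=
  exists E : set (set (T * T)),
    is_uniformity E /\ forall A : set T, open A <-> uniform_open E A.

Definition Vf (X : Type) (f : X -> X) (a : X) : set X :=
  [set x | exists n : nat, iter n f x = a].

(* Open sets of the topology generated by the basis { V_f(a) : a in X }. *)
Definition fun_alex_open (X : Type) (f : X -> X) (A : set X) : Prop :=
  forall x, A x -> exists a, Vf f a x /\ Vf f a `<=` A.

Definition functional_alexandroff (T : topologicalType) : Prop :=
  exists f : T -> T, forall A : set T, open A <-> fun_alex_open f A.

(** Points of a uniformizable space are topologically indistinguishable as
    soon as one lies in the minimal neighbourhood of the other, so in an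
    Alexandroff such space the sets V(x) are the classes of an equivalence
    relation, and they form a basis of the topology.  If the topology comes
    from f, then V(x) = V_f(x) and symmetry forces every y in V(x) to lie on
    the same f-cycle as x; a cycle is finite.  Conversely, if every class is
    finite, letting f run cyclically through each class gives V_f(x) = V(x). *)

From mathcomp Require Import all_boot all_order.
From mathcomp Require Import all_classical topology finmap.
Local Open Scope classical_set_scope.

Section MinimalNeighbourhood.
Context {T : topologicalType}.
Implicit Types (x y z : T) (A : set T).

Lemma minnbhd_refl x : minnbhd x x.
Proof. by move=> U []. Qed.

Lemma minnbhd_sub x A : open A -> A x -> minnbhd x `<=` A.
Proof. by move=> oA Ax y; apply. Qed.

Lemma minnbhd_trans {x y z} : minnbhd x y -> minnbhd y z -> minnbhd x z.
Proof. by move=> xy yz U [oU Ux]; apply: yz; split=> //; apply: xy. Qed.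

Lemma alexandroff_openP A : alexandroff T ->
  open A <-> forall x, A x -> minnbhd x `<=` A.
Proof.
move=> alex; split=> [oA x|Aup]; first exact: minnbhd_sub.
rewrite openE => x Ax; rewrite /interior nbhsE.
by exists (minnbhd x); [split; [exact: alex | exact: minnbhd_refl] | exact: Aup].
Qed.

End MinimalNeighbourhood.

Section UniformizableMinimalNeighbourhood.
Context {T : topologicalType}.
Hypothesis unif : uniformizable T.
Implicit Types (x y : T).

Lemma minnbhd_sym {x y} : minnbhd x y -> minnbhd y x.
Proof.
move: unif => [E [[_ [_ _ Erefl Einv Ecomp]] topE]] xy A [oA Ay].
have [W EW WA] := (topE A).1 oA y Ay.
(* O is the uniform interior of W^-1[x]; it is an open neighbourhood of x *)
pose O := [set z | exists2 U, E U & forall w, U (z, w) -> W (w, x)].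
have oO : open O.
  apply/topE => z [U EU zU]; have [V EV VVU] := Ecomp U EU.
  exists V => // w Vzw; exists V => // w' Vww'.
  by apply: zU; apply: VVU; exists w.
have Ox : O x by exists [set uv | W (uv.2, uv.1)]; [exact: Einv | move=> w].
have [U EU yU] := xy O (conj oO Ox).
by apply: WA; apply: yU; apply: Erefl.
Qed.

Lemma minnbhd_eq x y : minnbhd x y -> minnbhd y = minnbhd x.
Proof.
move=> xy; apply/seteqP; split=> z; first exact: minnbhd_trans.
exact: minnbhd_trans (minnbhd_sym xy).
Qed.

End UniformizableMinimalNeighbourhood.

Section FunctionalBasis.
Context {X : Type} {f : X -> X}.

Lemma Vf_refl a : Vf f a a.
Proof. by exists 0. Qed.

Lemma Vf_trans {a b y} : Vf f b a -> Vf f a y -> Vf f b y.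
Proof. by move=> [k ab] [n ya]; exists (k + n); rewrite iterD ya. Qed.

Lemma fun_alex_open_Vf a : fun_alex_open f (Vf f a).
Proof. by move=> x ax; exists a; split. Qed.

End FunctionalBasis.

Lemma finite_Vf_cycle {X : eqType} (f : X -> X) (x : X) :
  finite_set [set y | Vf f x y /\ Vf f y x].
Proof.
have [[p p_gt0 xp]|aper] := pselect (exists2 p, 0 < p & iter p f x = x).
  have loop_x : looping f x p.
    by case: p p_gt0 xp => // p _ xp; rewrite /looping xp mem_head.
  apply: (sub_finite_set _ (finite_seq (traject f x p))) => y [_ [m <-]].
  exact: (loopingP loop_x).
apply: (sub_finite_set _ (finite_set1 x)).
move=> y [[n yx] [[|m] xy]]; first by rewrite -xy.
by case: aper; exists (n + m.+1); [rewrite addnS | rewrite iterD xy].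
Qed.

Section CyclicSuccessor.
Variables (X : eqType) (p : seq X).
Hypothesis p_uniq : uniq p.

Lemma iter_next_reaches x y : x \in p -> y \in p -> exists k, iter k (next p) y = x.
Proof.
move=> xp /rot_to[i q rip].
have /fpathE cyc : fcycle (next p) (y :: q).
  by rewrite -rip -(eq_fcycle (next_rot i p_uniq)); apply: cycle_next; rewrite rot_uniq.
have : x \in traject (next p) y (size q).+2.
  by rewrite trajectS -(size_rcons q y) -cyc inE mem_rcons -rip mem_rot xp orbT.
by case/trajectP=> k _ ->; exists k.
Qed.

End CyclicSuccessor.

Lemma exists_Vf_classes {X : choiceType} (C : X -> set X) :
  (forall x, C x x) -> (forall x y, C x y -> C y = C x) ->
  (forall x, finite_set (C x)) -> exists f : X -> X, forall a, Vf f a = C a.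
Proof.
move=> Crefl Ceq Cfin.
pose s x : seq X := fset_set (C x).
have memsE x y : y \in s x <-> C x y by rewrite /s in_fset_set ?in_setE.
pose f y := next (s y) y.
have C_f y : C y (f y) by apply/memsE; rewrite mem_next; apply/memsE.
have C_iter k y : C y (iter k f y).
  elim: k => [|k IH] /=; first exact: Crefl.
  by rewrite -(Ceq _ _ IH); apply: C_f.
have iter_f a k y : C a y -> iter k f y = iter k (next (s a)) y.
  move=> ay; elim: k => //= k IH.
  have /Ceq sE : C a (iter k f y) by rewrite -(Ceq _ _ ay); apply: C_iter.
  by rewrite /f /s sE -IH.
exists f => a; apply/seteqP; split=> y.
  by move=> [n <-]; rewrite (Ceq _ _ (C_iter n y)); apply: Crefl.
move=> ay; have [k ka] : exists k, iter k (next (s a)) y = a.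
  by apply: iter_next_reaches; [exact: fset_uniq | apply/memsE..].
by exists k; rewrite (iter_f a).
Qed.

Section FunctionalTopology.
Context {T : topologicalType} {f : T -> T}.

Lemma minnbhd_fun_alex : (forall A, open A <-> fun_alex_open f A) ->
  forall a, minnbhd a = Vf f a.
Proof.
move=> topE a; apply/seteqP; split.
  by apply: minnbhd_sub; [apply/topE/fun_alex_open_Vf | apply: Vf_refl].
move=> y ay A [/topE oA Aa].
have [b [ba bA]] := oA a Aa.
by apply: bA; apply: Vf_trans ba ay.
Qed.

Lemma fun_alex_openP A : (forall a, Vf f a = minnbhd a) ->
  fun_alex_open f A <-> forall x, A x -> minnbhd x `<=` A.
Proof.
move=> VfE; split=> [Aopen x Ax y xy | Aup x Ax].
  have [a []] := Aopen x Ax; rewrite VfE => ax aA.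
  by apply: aA; apply: minnbhd_trans ax xy.
by exists x; rewrite VfE; split; [apply: minnbhd_refl | apply: Aup].
Qed.

End FunctionalTopology.

Theorem mainTheorem5 (T : topologicalType) :
  uniformizable T -> alexandroff T ->
  (functional_alexandroff T <-> forall x : T, finite_set (minnbhd x)).
Proof.
move=> unif alex; split=> [[f topE] x | fin].
  have minnbhdE := minnbhd_fun_alex topE.
  apply: (sub_finite_set _ (finite_Vf_cycle f x)) => y xy.
  by split; rewrite -minnbhdE //; apply: minnbhd_sym.
have [f VfE] := exists_Vf_classes (@minnbhd T) minnbhd_refl (minnbhd_eq unif) fin.
by exists f => A; rewrite alexandroff_openP // (fun_alex_openP _ VfE).
Qed.
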